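(* $\mathrm{sat}^*(n,\mathcal N)=\Theta(n)$; that is, there are constants $c_1,c_2>0$ such that $c_1 n\le \mathrm{sat}^*(n,\mathcal N)\le c_2 n$ for all sufficiently large $n$.
   Context: The poset $\mathcal N$ has four elements $a,b,c,d$ with $a<c$, $b<c$, $b<d$ and no other comparabilities. A family $\mathcal Q$ of sets (ordered by inclusion) contains an induced copy of $\mathcal N$ if there are distinct sets in $\mathcal Q$ whose inclusion relations are exactly those of $a,b,c,d$ above. A family $\mathcal F$ of subsets of $[n]=\{1,\dots,n\}$ is $\mathcal N$-saturated if $\mathcal F$ contains no induced copy of $\mathcal N$, but for every $S\subseteq[n]$ with $S\notin\mathcal F$, the family $\mathcal F\cup\{S\}$ contains an induced copy of $\mathcal N$. The induced saturation number $\mathrm{sat}^*(n,\mathcal N)$ is the minimum size of an $\mathcal N$-saturated family of subsets of $[n]$. *)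

From mathcomp Require Import all_boot all_order all_algebra.
Set Implicit Arguments. Unset Strict Implicit. Unset Printing Implicit Defensive.

Definition comparable_sets (n : nat) (x y : {set 'I_n}) : bool :=
  (x \subset y) || (y \subset x).

Definition is_induced_N (n : nat) (a b c d : {set 'I_n}) : bool :=
  [&& uniq [:: a; b; c; d],
      a \subset c, b \subset c, b \subset d,
      ~~ comparable_sets a b, ~~ comparable_sets a d &
      ~~ comparable_sets c d].

Definition contains_induced_N (n : nat) (F : {set {set 'I_n}}) : bool :=
  [exists a in F, exists b in F, exists c in F, exists d in F,
     is_induced_N a b c d].

Definition N_saturated (n : nat) (F : {set {set 'I_n}}) : bool :=
  ~~ contains_induced_N F &&
  [forall S : {set 'I_n}, (S \notin F) ==> contains_induced_N (S |: F)].

(* sat^*(n, N): minimum size of an N-saturated family of subsets of [n].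
   (The default value 2^n is only used if no saturated family exists,
   which never happens.) *)
Definition sat_star_N (n : nat) : nat :=
  \big[minn/2 ^ 2 ^ n]_(F : {set {set 'I_n}} | N_saturated F) #|F|.

(* Fix a maximal chain C of an N-saturated family F; it contains
   the empty set and [n].  For each j, let X_j be the largest member of C
   missing j and Y_j the smallest one containing j: no member of F lies
   strictly between them.  Saturation, applied to X_j + j or to Y_j - j, yields
   R in F with j in R and R - j inside X_j, or with j outside R and Y_j - j
   inside R.  As the X_j and the Y_j are totally ordered, the pair
   (R, [j in R]) determines j, whence n <= 2|F|.  The initial segments {0, ..., m-1} together with the
   singletons form an N-saturated family of 2n + 1 sets. *)

From mathcomp Require Import all_boot all_order all_algebra.
From mathcomp Require Import lra.
Import Order.TTheory GRing.Theory Num.Theory.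
Set Implicit Arguments. Unset Strict Implicit. Unset Printing Implicit Defensive.

Lemma leq_card_rel (I T : finType) (A : {pred T}) (r : I -> T -> bool) :
  (forall i, exists2 x, x \in A & r i x) ->
  (forall i1 i2 x, r i1 x -> r i2 x -> i1 = i2) -> #|I| <= #|A|.
Proof.
move=> ex_r r_inj.
have ex_i i : exists x, (x \in A) && r i x.
  by have [x xA rx] := ex_r i; exists x; rewrite xA.
pose f i := xchoose (ex_i i).
have fP i : (f i \in A) && r i (f i) := xchooseP (ex_i i).
have f_inj : injective f.
  move=> i1 i2 e; apply: (r_inj _ _ (f i1)); first by case/andP: (fP i1).
  by rewrite e; case/andP: (fP i2).
have <- : #|f @: [set: I]| = #|I| by rewrite card_imset // cardsT.
by apply: subset_leq_card; apply/subsetP=> _ /imsetP[i _ ->]; case/andP: (fP i).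
Qed.

Section InducedN.
Variable n : nat.
Implicit Types (A B R S Z a b c d : {set 'I_n}) (F : {set {set 'I_n}}).

Lemma comparable_setsC A B : comparable_sets A B = comparable_sets B A.
Proof. by rewrite /comparable_sets orbC. Qed.

Lemma comparable_setsPn A B :
  reflect (~~ (A \subset B) /\ ~~ (B \subset A)) (~~ comparable_sets A B).
Proof. by rewrite /comparable_sets negb_or; apply: andP. Qed.

Lemma comparable_sets_setC A B : comparable_sets (~: A) (~: B) = comparable_sets A B.
Proof. by rewrite /comparable_sets !setCS orbC. Qed.

Lemma is_induced_NP a b c d :
  reflect ([/\ a \proper c, b \proper c & b \proper d] /\
           [/\ ~~ comparable_sets a b, ~~ comparable_sets a d
             & ~~ comparable_sets c d])
          (is_induced_N a b c d).
Proof.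
have incomparable_neq A B : ~~ comparable_sets A B -> A != B.
  by apply: contraNneq => ->; rewrite /comparable_sets subxx.
have proper_neq A B : A \proper B -> A != B.
  by apply: contraTneq => ->; rewrite properxx.
apply: (iffP idP).
  rewrite /is_induced_N /= !inE !negb_or !properEneq.
  by case/and4P=> /and4P[/and3P[_ -> _] /andP[-> ->] _ _] -> -> /and4P[-> -> -> ->].
case=> [[ac bc bd] [ab ad cd]].
rewrite /is_induced_N ab ad cd !proper_sub //= !inE !negb_or.
rewrite (incomparable_neq _ _ ab) (incomparable_neq _ _ ad).
by rewrite (incomparable_neq _ _ cd) !proper_neq.
Qed.

Lemma contains_induced_NP F :
  reflect (exists a b c d, [/\ a \in F, b \in F, c \in F, d \in F
                             & is_induced_N a b c d])
          (contains_induced_N F).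
Proof.
apply: (iffP existsP) => [[a /andP[aF /existsP[b /andP[bF /existsP[c
  /andP[cF /existsP[d /andP[dF abcd]]]]]]]]|[a [b [c [d [aF bF cF dF abcd]]]]]].
  by exists a, b, c, d.
exists a; rewrite aF; apply/existsP; exists b; rewrite bF.
by apply/existsP; exists c; rewrite cF; apply/existsP; exists d; rewrite dF.
Qed.

Lemma N_saturated_free F : N_saturated F -> ~~ contains_induced_N F.
Proof. by case/andP. Qed.

Lemma N_saturated_setU1 F S :
  N_saturated F -> S \notin F -> contains_induced_N (S |: F).
Proof. by case/andP=> _ /forallP /(_ S) /implyP. Qed.

Definition N_at_bottom F S : Prop := exists x y z, [/\ x \in F, y \in F, z \in F &
  is_induced_N S x y z \/ is_induced_N x S y z].

Definition N_at_top F S : Prop := exists x y z, [/\ x \in F, y \in F, z \in F &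
  is_induced_N x y S z \/ is_induced_N x y z S].

Lemma contains_induced_N_setU1 F S :
  ~~ contains_induced_N F -> contains_induced_N (S |: F) ->
  N_at_bottom F S \/ N_at_top F S.
Proof.
move=> freeF /contains_induced_NP[a [b [c [d [aF bF cF dF]]]]].
move: aF bF cF dF; case/setU1P=> [->|aF]; case/setU1P=> [->|bF];
  case/setU1P=> [->|cF]; case/setU1P=> [->|dF] => abcd;
  have [[ac bc bd] [ab ad cd]] := is_induced_NP _ _ _ _ abcd;
  rewrite /comparable_sets ?properxx ?subxx ?orbT // in ac bc bd ab ad cd.
- by left; exists b, c, d; split=> //; left.
- by left; exists a, c, d; split=> //; right.
- by right; exists a, b, d; split=> //; left.
- by right; exists a, b, c; split=> //; right.
- by case/negP: freeF; apply/contains_induced_NP; exists a, b, c, d.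
Qed.

Lemma N_at_bottom_replace F S Z :
  ~~ contains_induced_N F -> Z \in F ->
  (forall R, R \in F -> S \proper R -> Z \proper R) ->
  (forall R, R \in F -> ~~ comparable_sets R S -> ~~ comparable_sets R Z) ->
  ~ N_at_bottom F S.
Proof.
move=> freeF ZF up inc [x [y [z [xF yF zF]]]].
case=> /is_induced_NP[[p1 p2 p3] [q1 q2 q3]]; case/negP: freeF;
  apply/contains_induced_NP.
- exists Z, x, y, z; split=> //; apply/is_induced_NP; split; split;
    rewrite 1?comparable_setsC ?inc ?up // comparable_setsC //.
- by exists x, Z, y, z; split=> //; apply/is_induced_NP; split; split;
    rewrite ?inc ?up.
Qed.

Lemma N_at_top_replace F S Z :
  ~~ contains_induced_N F -> Z \in F ->
  (forall R, R \in F -> R \proper S -> R \proper Z) ->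
  (forall R, R \in F -> ~~ comparable_sets R S -> ~~ comparable_sets R Z) ->
  ~ N_at_top F S.
Proof.
move=> freeF ZF down inc [x [y [z [xF yF zF]]]].
case=> /is_induced_NP[[p1 p2 p3] [q1 q2 q3]]; case/negP: freeF;
  apply/contains_induced_NP.
- exists x, y, Z, z; split=> //; apply/is_induced_NP; split; split;
    rewrite 1?comparable_setsC ?inc ?down // comparable_setsC //.
- by exists x, y, z, Z; split=> //; apply/is_induced_NP; split; split;
    rewrite ?inc ?down.
Qed.

Lemma is_induced_N_setC a b c d :
  is_induced_N (~: d) (~: c) (~: b) (~: a) = is_induced_N a b c d.
Proof.
apply/is_induced_NP/is_induced_NP; rewrite !properC !comparable_sets_setC;
  by case=> -[? ? ?] [? ? ?]; split; split; rewrite 1?comparable_setsC.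
Qed.

Lemma mem_imset_setC F A : (A \in [set ~: B | B in F]) = (~: A \in F).
Proof. by rewrite -{1}(setCK A) mem_imset //; apply: setC_inj. Qed.

Lemma contains_induced_N_setC F :
  contains_induced_N [set ~: B | B in F] = contains_induced_N F.
Proof.
apply/contains_induced_NP/contains_induced_NP=> -[a [b [c [d [aF bF cF dF abcd]]]]].
  by exists (~: d), (~: c), (~: b), (~: a); rewrite -!mem_imset_setC is_induced_N_setC.
exists (~: d), (~: c), (~: b), (~: a).
by rewrite !mem_imset_setC !setCK is_induced_N_setC.
Qed.

Lemma N_saturated_setC F : N_saturated F -> N_saturated [set ~: B | B in F].
Proof.
move=> satF; rewrite /N_saturated contains_induced_N_setC N_saturated_free //=.
apply/forallP=> S; apply/implyP; rewrite mem_imset_setC => /(N_saturated_setU1 satF).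
by rewrite -contains_induced_N_setC imsetU1 setCK.
Qed.

End InducedN.

Section Between.
Variables (n : nat) (F : {set {set 'I_n}}) (X S Y : {set 'I_n}).
Hypotheses (XS : X \subset S) (SY : S \subset Y).

Lemma incomparable_between_lower R :
  (forall U, U \in F -> X \proper U -> ~~ (Y \subset U) -> S \subset U) ->
  R \in F -> ~~ comparable_sets R S -> ~~ comparable_sets R X.
Proof.
move=> aboveX RF /comparable_setsPn[RS SR]; apply/comparable_setsPn; split.
  by apply: contra RS => /subset_trans; apply.
have YR : ~~ (Y \subset R) by apply: contra SR; apply: subset_trans.
apply/negP=> XR; case/negP: SR; apply: aboveX => //.
by rewrite properE XR; apply: contra RS => /subset_trans; apply.
Qed.

Lemma incomparable_between_upper R :
  (forall D, D \in F -> D \proper Y -> ~~ (D \subset X) -> D \subset S) ->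
  R \in F -> ~~ comparable_sets R S -> ~~ comparable_sets R Y.
Proof.
move=> belowY RF /comparable_setsPn[RS SR]; apply/comparable_setsPn; split; last first.
  by apply: contra SR; apply: subset_trans.
have RX : ~~ (R \subset X) by apply: contra RS => /subset_trans; apply.
apply/negP=> RY; case/negP: RS; apply: belowY => //.
by rewrite properE RY; apply: contra SR; apply: subset_trans.
Qed.

End Between.

Definition no_member_between n (F : {set {set 'I_n}}) (X Y : {set 'I_n}) : Prop :=
  forall W, W \in F -> X \proper W -> W \proper Y -> False.

Section CoveringPair.
Variables (n : nat) (F : {set {set 'I_n}}) (X Y : {set 'I_n}) (j : 'I_n).
Hypotheses (satF : N_saturated F) (XF : X \in F) (YF : Y \in F)
  (XY : X \subset Y) (coverXY : no_member_between F X Y)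
  (jY : j \in Y) (jX : j \notin X).

Let freeF := N_saturated_free satF.

Lemma side_members_nested D U :
  D \in F -> D \proper Y -> ~~ (D \subset X) ->
  U \in F -> X \proper U -> ~~ (Y \subset U) -> D \subset U.
Proof.
move=> DF DY DX UF XU YU; apply/negPn/negP=> DU.
case/negP: freeF; apply/contains_induced_NP.
exists D, X, Y, U; split=> //; apply/is_induced_NP; split; split=> //.
- by rewrite properE XY; apply: contra YU => /subset_trans; apply; apply: proper_sub.
- apply/comparable_setsPn; split=> //; apply/negP=> XD.
  by apply: (coverXY DF) => //; rewrite properE XD.
- apply/comparable_setsPn; split=> //; apply/negP=> UD.
  by apply: (coverXY UF XU); apply: sub_proper_trans UD DY.
- apply/comparable_setsPn; split=> //; apply/negP=> UY.
  by apply: (coverXY UF XU); rewrite properE UY.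
Qed.

Lemma below_or_above :
  (forall R, R \in F -> X \proper R -> Y \subset R) \/
  (forall R, R \in F -> R \proper Y -> R \subset X).
Proof.
pose Ds := [set D in F | (D \proper Y) && ~~ (D \subset X)].
pose Us := [set U in F | (X \proper U) && ~~ (Y \subset U)].
have [Us0|[U0 U0Us]] := set_0Vmem Us.
  left=> R RF XR; apply/negPn/negP=> YR.
  by have := in_set0 R; rewrite -Us0 inE RF XR YR.
have [Ds0|[D0 D0Ds]] := set_0Vmem Ds.
  right=> R RF RY; apply/negPn/negP=> RX.
  by have := in_set0 R; rewrite -Ds0 inE RF RY RX.
(* Otherwise X :|: \bigcup Ds lies strictly between X and Y and is related to
   every member of F as X is from above and as Y is from below, so adding it
   to F cannot create an induced N. *)
exfalso.
have DsUs D U : D \in Ds -> U \in Us -> D \subset U.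
  by rewrite !inE => /and3P[DF DY DX] /and3P[UF XU YU]; apply: side_members_nested.
pose S := X :|: \bigcup_(D in Ds) D.
have XS : X \subset S by apply: subsetUl.
have SY : S \subset Y.
  by rewrite subUset XY; apply/bigcupsP=> D; rewrite inE => /and3P[_ /proper_sub].
have DsS D : D \in Ds -> D \subset S.
  by move=> DDs; apply: subset_trans (subsetUr _ _); apply: bigcup_sup.
have SUs U : U \in Us -> S \subset U.
  move=> UUs; rewrite subUset; apply/andP; split; last by apply/bigcupsP=> D /DsUs; apply.
  by move: UUs; rewrite inE => /and3P[_ /proper_sub].
have SnF : S \notin F.
  apply/negP=> SF; apply: (coverXY SF); rewrite properE ?XS ?SY /=.
    move: D0Ds (DsS _ D0Ds); rewrite inE => /and3P[_ _ D0X] D0S.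
    by apply: contra D0X; apply: subset_trans.
  move: U0Us (SUs _ U0Us); rewrite inE => /and3P[_ _ YU0] SU0.
  by apply: contra YU0 => /subset_trans; apply.
have incX R : R \in F -> ~~ comparable_sets R S -> ~~ comparable_sets R X.
  apply: (incomparable_between_lower XS SY) => U UF XU YU.
  by apply: SUs; rewrite inE UF XU YU.
have incY R : R \in F -> ~~ comparable_sets R S -> ~~ comparable_sets R Y.
  apply: (incomparable_between_upper XS SY) => D DF DY DX.
  by apply: DsS; rewrite inE DF DY DX.
case: (contains_induced_N_setU1 freeF (N_saturated_setU1 satF SnF)).
  by apply: N_at_bottom_replace freeF XF _ incX => R _; apply: sub_proper_trans.
by apply: N_at_top_replace freeF YF _ incY => R _ /proper_sub_trans; apply.
Qed.

Lemma lower_witness :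
  (forall R, R \in F -> X \proper R -> Y \subset R) ->
  exists2 R, R \in F & (j \in R) && (R \subset j |: X).
Proof.
move=> aboveX.
have [YjX|YjXn] := boolP (Y \subset j |: X); first by exists Y; rewrite ?jY.
have [/exists_inP[R RF wR]|/exists_inPn noW] :=
  boolP [exists R in F, (j \in R) && (R \subset j |: X)]; first by exists R.
exfalso; pose S := j |: X.
have XS : X \subset S by apply: subsetU1.
have SY : S \subset Y by rewrite subUset sub1set jY XY.
have SnF : S \notin F.
  apply/negP=> SF; apply: (coverXY SF); rewrite properE ?XS ?SY //.
  by apply/subsetPn; exists j; rewrite ?setU11.
have belowS R : R \in F -> R \subset S -> R \subset X.
  move=> RF RS; have := noW R RF; rewrite RS andbT => jR.
  apply/subsetP=> x xR; move/subsetP: RS => /(_ x xR) /setU1P[xj|//].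
  by rewrite -xj xR in jR.
have incX R : R \in F -> ~~ comparable_sets R S -> ~~ comparable_sets R X.
  apply: (incomparable_between_lower XS SY) => U UF XU YU.
  by rewrite aboveX in YU.
case: (contains_induced_N_setU1 freeF (N_saturated_setU1 satF SnF)).
  by apply: N_at_bottom_replace freeF XF _ incX => R _; apply: sub_proper_trans.
move=> [a [b [c [aF bF cF []]]]] /is_induced_NP[[p1 p2 p3] [q1 q2 q3]];
  case/negP: freeF; apply/contains_induced_NP.
- have aX := belowS a aF (proper_sub p1).
  have bX := belowS b bF (proper_sub p2).
  exists a, b, X, c; split=> //; apply/is_induced_NP; split; split=> //.
  + rewrite properE aX; apply: contra q1 => /(subset_trans bX) ba.
    by rewrite /comparable_sets ba orbT.
  + rewrite properE bX; apply: contra q1 => /(subset_trans aX) ab.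
    by rewrite /comparable_sets ab.
  + by rewrite comparable_setsC incX // comparable_setsC.
- have bX := belowS b bF (proper_sub p3).
  exists a, b, c, X; split=> //; apply/is_induced_NP; split; split; rewrite ?incX //.
  rewrite properE bX; apply: contra q3 => /sub_proper_trans /(_ p2) /aboveX.
  by move=> /(_ cF) /(subset_trans SY) Sc; rewrite /comparable_sets Sc orbT.
Qed.

End CoveringPair.

Lemma upper_witness n (F : {set {set 'I_n}}) X Y (j : 'I_n) :
  N_saturated F -> X \in F -> Y \in F -> X \subset Y ->
  no_member_between F X Y -> j \in Y -> j \notin X ->
  (forall R, R \in F -> R \proper Y -> R \subset X) ->
  exists2 R, R \in F & (j \notin R) && (Y \subset j |: R).
Proof.
move=> satF XF YF XY coverXY jY jX belowY.
(* The complement family is N-saturated as well, N being self-dual, and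
   complementation turns its lower witnesses into upper witnesses for F. *)
have [||||||||R] := @lower_witness n [set ~: B | B in F] (~: Y) (~: X) j.
- exact: N_saturated_setC.
- by rewrite mem_imset_setC setCK.
- by rewrite mem_imset_setC setCK.
- by rewrite setCS.
- move=> W; rewrite mem_imset_setC => WF YW WX.
  by apply: (coverXY _ WF); rewrite -properC setCK.
- by rewrite inE.
- by rewrite inE negbK.
- move=> R; rewrite mem_imset_setC => RF YR; rewrite -setCS setCK.
  by apply: belowY RF _; rewrite -properC setCK.
rewrite mem_imset_setC => RF /andP[jR RjY]; exists (~: R) => //.
by rewrite inE jR /= -subDset setDE setIC -[Y]setCK -setCU setCS.
Qed.

Definition step_witness n (j : 'I_n) (X Y R : {set 'I_n}) : bool :=
  ((j \in R) && (R \subset j |: X)) || ((j \notin R) && (Y \subset j |: R)).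

Lemma covering_pair_witness n (F : {set {set 'I_n}}) X Y (j : 'I_n) :
  N_saturated F -> X \in F -> Y \in F -> X \subset Y ->
  no_member_between F X Y -> j \in Y -> j \notin X ->
  exists2 R, R \in F & step_witness j X Y R.
Proof.
move=> satF XF YF XY coverXY jY jX; rewrite /step_witness.
have [above|below] := below_or_above satF XF YF XY coverXY.
  have [R RF w] := lower_witness satF XF YF XY coverXY jY jX above.
  by exists R; rewrite ?w.
have [R RF w] := upper_witness satF XF YF XY coverXY jY jX below.
by exists R; rewrite ?w ?orbT.
Qed.



Section Chains.
Variable n : nat.
Implicit Types (A B W Z : {set 'I_n}) (C F : {set {set 'I_n}}) (j : 'I_n).

Definition set_chain C : bool := [forall A in C, forall B in C, comparable_sets A B].

Lemma set_chainP C A B : set_chain C -> A \in C -> B \in C -> comparable_sets A B.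
Proof. by move/forall_inP=> Cc /Cc /forall_inP; apply. Qed.

Lemma set_chain_sub_card C A B :
  set_chain C -> A \in C -> B \in C -> #|A| <= #|B| -> A \subset B.
Proof.
move=> Cc AinC BinC AB; case/orP: (set_chainP Cc AinC BinC) => // BA.
by have /eqP-> : B == A by rewrite eqEcard BA.
Qed.

Lemma set_chain_nocross C A1 A2 (i1 i2 : 'I_n) : set_chain C ->
  A1 \in C -> A2 \in C -> i1 \notin A1 -> i1 \in A2 -> i2 \notin A2 -> i2 \in A1 ->
  False.
Proof.
move=> Cc A1C A2C i1A1 i1A2 i2A2 i2A1.
case/orP: (set_chainP Cc A1C A2C) => /subsetP sub.
  by rewrite sub in i2A2.
by rewrite sub in i1A1.
Qed.

Lemma exists_maximal_chain F : exists C, [/\ C \subset F, set_chain C &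
  forall W, W \in F -> (forall Z, Z \in C -> comparable_sets W Z) -> W \in C].
Proof.
have chain0 : (set0 \subset F) && set_chain set0.
  by rewrite sub0set; apply/forall_inP=> A; rewrite inE.
have [C /andP[CF Cc] Cmax] :=
  @arg_maxnP _ set0 (fun C => (C \subset F) && set_chain C) (fun C => #|C|) chain0.
exists C; split=> // W WF WC; apply/negPn/negP=> WnC.
have : (W |: C \subset F) && set_chain (W |: C).
  rewrite subUset sub1set WF CF /=; apply/forall_inP=> A /setU1P[->|AinC];
    apply/forall_inP=> B /setU1P[->|BinC].
  - by rewrite /comparable_sets subxx.
  - exact: WC.
  - by rewrite comparable_setsC WC.
  - exact: set_chainP Cc AinC BinC.
by move/Cmax; rewrite cardsU1 WnC /= add1n ltnn.
Qed.

Definition cut_below C j : {set 'I_n} :=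
  [arg max_(Z > set0 | (Z \in C) && (j \notin Z)) #|Z|].
Definition cut_above C j : {set 'I_n} :=
  [arg min_(Z < setT | (Z \in C) && (j \in Z)) #|Z|].

Lemma cut_belowP C j : set_chain C -> set0 \in C ->
  [/\ cut_below C j \in C, j \notin cut_below C j &
      forall Z, Z \in C -> j \notin Z -> Z \subset cut_below C j].
Proof.
move=> Cc C0; rewrite /cut_below; case: arg_maxnP; first by rewrite C0 inE.
move=> X /andP[XC jX] Xmax; split=> // Z ZC jZ.
by apply: (set_chain_sub_card Cc ZC XC); apply: Xmax; rewrite ZC.
Qed.

Lemma cut_aboveP C j : set_chain C -> setT \in C ->
  [/\ cut_above C j \in C, j \in cut_above C j &
      forall Z, Z \in C -> j \in Z -> cut_above C j \subset Z].
Proof.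
move=> Cc CT; rewrite /cut_above; case: arg_minnP; first by rewrite CT inE.
move=> Y /andP[YC jY] Ymin; split=> // Z ZC jZ.
by apply: (set_chain_sub_card Cc YC ZC); apply: Ymin; rewrite ZC.
Qed.

Section Cuts.
Variables (C : {set {set 'I_n}}) (j : 'I_n).
Hypotheses (Cc : set_chain C) (C0 : set0 \in C) (CT : setT \in C).

Lemma cut_below_sub_above : cut_below C j \subset cut_above C j.
Proof.
have [XC jX _] := cut_belowP j Cc C0; have [YC jY _] := cut_aboveP j Cc CT.
case/orP: (set_chainP Cc XC YC) => // /subsetP YX.
by rewrite YX in jX.
Qed.

Lemma cut_no_member_between F :
  (forall W, W \in F -> (forall Z, Z \in C -> comparable_sets W Z) -> W \in C) ->
  no_member_between F (cut_below C j) (cut_above C j).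
Proof.
move=> Cmax W WF XW WY.
have [XC jX Xmax] := cut_belowP j Cc C0; have [YC jY Ymin] := cut_aboveP j Cc CT.
have WC : W \in C.
  apply: Cmax WF _ => Z ZC; rewrite /comparable_sets.
  have [jZ|jZ] := boolP (j \in Z).
    by rewrite (subset_trans (proper_sub WY) (Ymin Z ZC jZ)).
  by rewrite (subset_trans (Xmax Z ZC jZ) (proper_sub XW)) orbT.
have [jW|jW] := boolP (j \in W).
  by move: WY; rewrite properE Ymin ?andbF.
by move: XW; rewrite properE Xmax ?andbF.
Qed.

End Cuts.

Lemma step_witness_inj C (j1 j2 : 'I_n) R :
  set_chain C -> set0 \in C -> setT \in C ->
  step_witness j1 (cut_below C j1) (cut_above C j1) R ->
  step_witness j2 (cut_below C j2) (cut_above C j2) R ->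
  (j1 \in R) = (j2 \in R) -> j1 = j2.
Proof.
move=> Cc C0 CT w1 w2 e; apply/eqP/negPn/negP=> j12.
have [X1C jX1 _] := cut_belowP j1 Cc C0; have [X2C jX2 _] := cut_belowP j2 Cc C0.
have [Y1C jY1 _] := cut_aboveP j1 Cc CT; have [Y2C jY2 _] := cut_aboveP j2 Cc CT.
move: w1 w2; rewrite /step_witness -e.
have [j1R|j1R] := boolP (j1 \in R); rewrite /= ?orbF => /subsetP R1 /subsetP R2.
  have j2R : j2 \in R by rewrite -e.
  apply: (set_chain_nocross Cc X1C X2C jX1 _ jX2).
    by move: (R2 _ j1R); rewrite in_setU1 (negbTE j12).
  by move: (R1 _ j2R); rewrite in_setU1 eq_sym (negbTE j12).
have j2R : j2 \notin R by rewrite -e.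
apply: (set_chain_nocross Cc Y2C Y1C _ jY1 _ jY2).
  by apply/negP=> /R2; rewrite in_setU1 (negbTE j12) (negbTE j1R).
by apply/negP=> /R1; rewrite in_setU1 eq_sym (negbTE j12) (negbTE j2R).
Qed.

End Chains.

Lemma N_saturated_set0 n (F : {set {set 'I_n}}) : N_saturated F -> set0 \in F.
Proof.
move=> satF; apply/negPn/negP=> nF.
have [] := contains_induced_N_setU1 (N_saturated_free satF) (N_saturated_setU1 satF nF);
  move=> [x [y [z [_ _ _ []]]]] /is_induced_NP[[p1 p2 p3] [q1 q2 q3]].
- by rewrite /comparable_sets sub0set in q1.
- by rewrite /comparable_sets sub0set orbT in q1.
- by rewrite properE sub0set andbF in p1.
- by rewrite properE sub0set andbF in p3.
Qed.

Lemma N_saturated_setT n (F : {set {set 'I_n}}) : N_saturated F -> setT \in F.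
Proof.
move=> satF.
by have := N_saturated_set0 (N_saturated_setC satF); rewrite mem_imset_setC setC0.
Qed.

Lemma N_saturated_card_ge n (F : {set {set 'I_n}}) : N_saturated F -> n <= 2 * #|F|.
Proof.
move=> satF.
have [C [CF Cc Cmax]] := exists_maximal_chain F.
have C0 : set0 \in C.
  by apply: Cmax (N_saturated_set0 satF) _ => Z _; rewrite /comparable_sets sub0set.
have CT : setT \in C.
  by apply: Cmax (N_saturated_setT satF) _ => Z _; rewrite /comparable_sets subsetT orbT.
pose wit j (Rb : {set 'I_n} * bool) :=
  step_witness j (cut_below C j) (cut_above C j) Rb.1 && (Rb.2 == (j \in Rb.1)).
have := @leq_card_rel _ _ (setX F [set: bool]) wit.
rewrite card_ord cardsX cardsT card_bool mulnC; apply.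
  move=> j; have [XC jX _] := cut_belowP j Cc C0; have [YC jY _] := cut_aboveP j Cc CT.
  have [R RF w] := covering_pair_witness satF (subsetP CF _ XC) (subsetP CF _ YC)
    (cut_below_sub_above j Cc C0 CT) (cut_no_member_between Cc C0 CT Cmax) jY jX.
  exists (R, j \in R); first by rewrite in_setX RF in_setT.
  by rewrite /wit /= w eqxx.
move=> j1 j2 [R b]; rewrite /wit /= => /andP[w1 /eqP e1] /andP[w2 /eqP e2].
exact: step_witness_inj Cc C0 CT w1 w2 (etrans (esym e1) e2).
Qed.

Section PrefixFamily.
Variable n : nat.
Implicit Types (S : {set 'I_n}) (i j k : 'I_n).

Definition prefix (m : nat) : {set 'I_n} := [set i : 'I_n | i < m].

Definition prefix_family : {set {set 'I_n}} :=
  [set prefix m | m : 'I_n.+1] :|: [set [set i] | i : 'I_n].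

Lemma prefix_in_prefix_family m : m <= n -> prefix m \in prefix_family.
Proof.
by move=> mn; rewrite inE; apply/orP; left; apply/imsetP; exists (inord m); rewrite ?inordK.
Qed.

Lemma set1_in_prefix_family i : [set i] \in prefix_family.
Proof. by rewrite inE; apply/orP; right; apply/imsetP; exists i. Qed.

Lemma subset_prefix m1 m2 : m1 <= m2 -> prefix m1 \subset prefix m2.
Proof. by move=> m12; apply/subsetP=> i; rewrite !inE => /leq_trans; apply. Qed.

Lemma comparable_prefix m1 m2 : comparable_sets (prefix m1) (prefix m2).
Proof.
rewrite /comparable_sets; case: (leqP m1 m2) => [/subset_prefix -> //|/ltnW m21].
by rewrite (subset_prefix m21) orbT.
Qed.

Lemma card_prefix_family : #|prefix_family| <= n.+1 + n.
Proof.
apply: leq_trans (leq_card_setU _ _) _; apply: leq_add.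
  by apply: leq_trans (leq_imset_card _ _) _; rewrite card_ord.
by apply: leq_trans (leq_imset_card _ _) _; rewrite card_ord.
Qed.

Lemma prefix_family_free : ~~ contains_induced_N prefix_family.
Proof.
apply/contains_induced_NP=> -[a [b [c [d [_ _ cF dF]]]]].
case/is_induced_NP=> [[_ bc bd] [ab _ cd]].
have b0 : b != set0.
  by apply: contraNneq ab => ->; rewrite /comparable_sets sub0set orbT.
have above_b_prefix Z : Z \in prefix_family -> b \proper Z -> exists m, Z = prefix m.
  case/setUP=> /imsetP[m _ ->]; first by exists m.
  rewrite properE subset1 (negbTE b0) orbF => /andP[/eqP-> ].
  by rewrite subxx.
have [m1 c_prefix] := above_b_prefix c cF bc.
have [m2 d_prefix] := above_b_prefix d dF bd.
by rewrite c_prefix d_prefix comparable_prefix in cd.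
Qed.

Lemma is_induced_N_set1_set1_prefix k j S :
  k \notin S -> k < j -> j \in S -> (forall i, i \in S -> j <= i) -> S != [set j] ->
  is_induced_N [set k] [set j] (prefix j.+1) S.
Proof.
move=> kS kj jS jmin Sj.
have jk : j != k by rewrite -(inj_eq val_inj) gtn_eqF.
have kpre : k \in prefix j.+1 by rewrite inE ltnS ltnW.
have jpre : j \in prefix j.+1 by rewrite inE ltnSn.
have Snsub1 : ~~ (S \subset [set j]).
  by rewrite subset1 negb_or Sj; apply: contraTneq jS => ->; rewrite inE.
apply/is_induced_NP; split; split; rewrite /comparable_sets ?negb_or.
- by rewrite properE sub1set kpre; apply/subsetPn; exists j; rewrite ?inE.
- by rewrite properE sub1set jpre; apply/subsetPn; exists k; rewrite // inE eq_sym.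
- by rewrite properE sub1set jS.
- by rewrite !sub1set !inE jk eq_sym jk.
- by rewrite sub1set kS; apply/subsetPn; exists j; rewrite ?inE.
- apply/andP; split; first by apply/subsetPn; exists k.
  apply: contra Snsub1 => /subsetP Spre; apply/subsetP=> i iS.
  have := Spre i iS; rewrite !inE ltnS => ij.
  by rewrite -(inj_eq val_inj) eqn_leq ij jmin.
Qed.

Lemma is_induced_N_set1_prefix_prefix k j S :
  0 < k -> prefix k \subset S -> k \notin S -> j \in S -> k < j -> S != [set j] ->
  is_induced_N [set j] (prefix k) S (prefix k.+1).
Proof.
move=> k_gt0 preS kS jS kj Sj.
pose i0 : 'I_n := Ordinal (ltn_trans k_gt0 (ltn_ord k)).
have prefix_nsub1 m : 0 < m -> ~~ (prefix m \subset [set j]).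
  move=> m_gt0; apply/subsetPn; exists i0; rewrite !inE //.
  by rewrite -(inj_eq val_inj) eq_sym lt0n_neq0 // (ltn_trans k_gt0 kj).
have jnpre : j \notin prefix k.+1 by rewrite inE ltnS -ltnNge.
have kpre : k \in prefix k.+1 by rewrite inE ltnSn.
apply/is_induced_NP; split; split; rewrite /comparable_sets ?negb_or.
- rewrite properE sub1set jS subset1 negb_or Sj.
  by apply: contraTneq jS => ->; rewrite inE.
- by rewrite properE preS; apply/subsetPn; exists j; rewrite // inE -leqNgt ltnW.
- by rewrite properE subset_prefix //; apply/subsetPn; exists k; rewrite // inE ltnn.
- by rewrite sub1set prefix_nsub1 // inE -leqNgt ltnW.
- by rewrite sub1set prefix_nsub1 // jnpre.
- by apply/andP; split; [apply/subsetPn; exists j | apply/subsetPn; exists k].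
Qed.

Lemma exists_prefix_gap S : S \notin prefix_family ->
  exists k j, [/\ prefix k \subset S, k \notin S, j \in S, k < j &
                 forall i, i \in S -> i \notin prefix k -> j <= i].
Proof.
move=> SnF; have S_neprefix m : m <= n -> S != prefix m.
  by move=> mn; apply: contraNneq SnF => ->; apply: prefix_in_prefix_family.
have [x0 _ x0S] : exists2 x, x \in setT & x \notin S.
  apply/subsetPn; rewrite subTset; apply: contra (S_neprefix n (leqnn n)) => /eqP->.
  by apply/eqP/setP=> i; rewrite !inE ltn_ord.
have [k kS kmin] := @arg_minnP _ x0 (fun x => x \notin S) val x0S.
have preS : prefix k \subset S.
  apply/subsetP=> x; rewrite inE => xk; apply/negPn/negP=> xS.
  by have := kmin x xS; rewrite leqNgt xk.
have [j0 j0S j0pre] : exists2 j, j \in S & j \notin prefix k.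
  apply/subsetPn; apply: contra (S_neprefix k (ltnW (ltn_ord k))) => Spre.
  by rewrite eqEsubset Spre preS.
have [|j /andP[jS jpre] jmin] :=
  @arg_minnP _ j0 (fun x => (x \in S) && (x \notin prefix k)) val; first by rewrite j0S.
exists k, j; split=> //; last by move=> i iS ipre; apply: jmin; rewrite iS.
move: jpre; rewrite inE -leqNgt ltn_neqAle => ->; rewrite andbT.
by apply: contraNneq kS => /val_inj ->.
Qed.

Lemma prefix_family_saturated : N_saturated prefix_family.
Proof.
rewrite /N_saturated prefix_family_free; apply/forallP=> S; apply/implyP=> SnF.
have [k [j [preS kS jS kj jmin]]] := exists_prefix_gap SnF.
have Sj : S != [set j].
  by apply: contraNneq SnF => ->; apply: set1_in_prefix_family.
have inF A : A \in prefix_family -> A \in S |: prefix_family by apply: setU1r.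
apply/contains_induced_NP; have [k0|k_gt0] := posnP k.
  exists [set k], [set j], (prefix j.+1), S.
  rewrite setU11 !inF ?set1_in_prefix_family ?prefix_in_prefix_family //; split=> //.
  by apply: is_induced_N_set1_set1_prefix => // i iS; apply: jmin; rewrite // inE k0.
exists [set j], (prefix k), S, (prefix k.+1).
rewrite setU11 !inF ?set1_in_prefix_family ?prefix_in_prefix_family ?ltn_ord 1?ltnW //.
by split=> //; apply: is_induced_N_set1_prefix_prefix.
Qed.

End PrefixFamily.

Lemma sat_star_N_lower_bound n : n <= 2 * sat_star_N n.
Proof.
rewrite /sat_star_N; apply: (big_ind (fun m => n <= 2 * m)) => [||F].
- apply: leq_trans (ltnW (ltn_expl n (ltnSn 1))) _.
  apply: leq_trans (leq_pexp2l (isT : 0 < 2) (ltnW (ltn_expl n (ltnSn 1)))) _.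
  by rewrite leq_pmull.
- by move=> x y; rewrite /minn; case: ifP.
- exact: N_saturated_card_ge.
Qed.

Lemma sat_star_N_upper_bound n : sat_star_N n <= n.+1 + n.
Proof.
rewrite /sat_star_N -minEnat -leEnat.
apply: le_trans (bigmin_le_cond _ _ (prefix_family_saturated n)) _.
by rewrite leEnat card_prefix_family.
Qed.

Local Open Scope ring_scope.

Theorem theorem4p3 :
  exists (c1 c2 : rat) (N0 : nat),
    0 < c1 /\ 0 < c2 /\
    forall n : nat, (N0 <= n)%N ->
      c1 * n%:R <= (sat_star_N n)%:R /\ (sat_star_N n)%:R <= c2 * n%:R.
Proof.
exists (1/2), 3, 1%N; split=> //; split=> // n n_ge1.
have lower : n%:R <= 2 * (sat_star_N n)%:R :> rat.
  by rewrite -natrM ler_nat sat_star_N_lower_bound.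
have upper : (sat_star_N n)%:R <= n%:R + 1 + n%:R :> rat.
  by rewrite natr1 -natrD ler_nat sat_star_N_upper_bound.
have n_ge1' : 1 <= n%:R :> rat by rewrite ler1n.
split; lra.
Qed.
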